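(* Let $m\ge 2$, let $A=(A(i,j))_{i,j=0}^{m-1}$ be a primitive matrix with entries in $\{0,1\}$, and let $q>1$. Then there exists a unique vector $(t_i)_{i=0}^{m-1}$ satisfying $$t_i^q = \sum_{j=0}^{m-1} A(i,j)\, t_j,\qquad t_i>1,\qquad i=0,\dots,m-1.$$
   Context: A non-negative matrix is primitive if some power of it has all entries strictly positive. *)

From Stdlib Require Export Reals.
Open Scope R_scope.

Fixpoint rsum (n : nat) (f : nat -> R) : R :=
  match n with
  | O => 0
  | S n' => rsum n' f + f n'
  end.

Fixpoint matpow (m : nat) (A : nat -> nat -> R) (k : nat) : nat -> nat -> R :=
  match k with
  | O => fun i j => if Nat.eqb i j then 1 else 0
  | S k' => fun i j => rsum m (fun l => matpow m A k' i l * A l j)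
  end.

Definition nonneg_matrix (m : nat) (A : nat -> nat -> R) : Prop :=
  forall i j, (i < m)%nat -> (j < m)%nat -> 0 <= A i j.

Definition primitive_matrix (m : nat) (A : nat -> nat -> R) : Prop :=
  nonneg_matrix m A /\
  exists k : nat, forall i j, (i < m)%nat -> (j < m)%nat -> 0 < matpow m A k i j.

Definition zero_one_matrix (m : nat) (A : nat -> nat -> R) : Prop :=
  forall i j, (i < m)%nat -> (j < m)%nat -> A i j = 0 \/ A i j = 1.

Definition solves (m : nat) (A : nat -> nat -> R) (q : R) (t : nat -> R) : Prop :=
  forall i, (i < m)%nat ->
    1 < t i /\ Rpower (t i) q = rsum m (fun j => A i j * t j).

(** The map x ↦ (max(1, A x))^(1/q) is monotone and maps the box [1, M]^m into
    itself once M^q = m M, so the supremum of its post-fixed points in the box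
    is a fixed point t >= 1.  An index with t_i = 1 forces row i of A to be zero
    or a unit vector pointing to another such index; the set of these indices
    is then closed under the rows of every power of A, which primitivity (with
    m >= 2) forbids, so t_i > 1 and the max with 1 is inactive.  Uniqueness:
    if s, t are solutions and c = max_i s_i / t_i > 1 is attained at i, then
    c^q t_i^q = s_i^q = (A s)_i <= c (A t)_i = c t_i^q, contradicting q > 1. *)

From Stdlib Require Import Reals Lra Lia Arith Classical.
Open Scope R_scope.

Lemma rsum_ext n f g :
  (forall p, (p < n)%nat -> f p = g p) -> rsum n f = rsum n g.
Proof.
  induction n as [|n IH]; intros H; simpl; [reflexivity|].
  rewrite IH, H; auto; intros; apply H; lia.
Qed.

Lemma rsum_le n f g :
  (forall p, (p < n)%nat -> f p <= g p) -> rsum n f <= rsum n g.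
Proof.
  induction n as [|n IH]; intros H; simpl; [lra|].
  assert (f n <= g n) by (apply H; lia).
  assert (rsum n f <= rsum n g) by (apply IH; intros; apply H; lia).
  lra.
Qed.

Lemma rsum_mult_l n c f : rsum n (fun p => c * f p) = c * rsum n f.
Proof. induction n as [|n IH]; simpl; [ring|]. rewrite IH; ring. Qed.

Lemma rsum_const n c : rsum n (fun _ => c) = INR n * c.
Proof. induction n as [|n IH]; simpl rsum; [simpl; ring|]. rewrite IH, S_INR; ring. Qed.

Lemma rsum_zero n f : (forall p, (p < n)%nat -> f p = 0) -> rsum n f = 0.
Proof. intros H. rewrite (rsum_ext n f (fun _ => 0)), rsum_const by auto. ring. Qed.

Lemma rsum_nonneg n f : (forall p, (p < n)%nat -> 0 <= f p) -> 0 <= rsum n f.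
Proof. intros H. rewrite <- (rsum_zero n (fun _ => 0)) by auto. now apply rsum_le. Qed.

Lemma rsum_ge_term n f j :
  (forall p, (p < n)%nat -> 0 <= f p) -> (j < n)%nat -> f j <= rsum n f.
Proof.
  induction n as [|n IH]; intros H Hj; [lia|]. simpl.
  assert (0 <= f n) by (apply H; lia).
  destruct (Nat.eq_dec j n) as [->|Hjn].
  - assert (0 <= rsum n f) by (apply rsum_nonneg; intros; apply H; lia). lra.
  - assert (f j <= rsum n f) by (apply IH; [intros; apply H|]; lia). lra.
Qed.

Lemma rsum_ge_two_terms n f j p :
  (forall l, (l < n)%nat -> 0 <= f l) -> (j < n)%nat -> (p < n)%nat -> j <> p ->
  f j + f p <= rsum n f.
Proof.
  induction n as [|n IH]; intros H Hj Hp Hjp; [lia|]. simpl.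
  assert (0 <= f n) by (apply H; lia).
  assert (Hf : forall l, (l < n)%nat -> 0 <= f l) by (intros; apply H; lia).
  destruct (Nat.eq_dec j n) as [->|Hjn]; [|destruct (Nat.eq_dec p n) as [->|Hpn]].
  - assert (f p <= rsum n f) by (apply rsum_ge_term; auto; lia). lra.
  - assert (f j <= rsum n f) by (apply rsum_ge_term; auto; lia). lra.
  - assert (f j + f p <= rsum n f) by (apply IH; auto; lia). lra.
Qed.

Lemma rsum_indicator n j g :
  (j < n)%nat -> rsum n (fun l => (if Nat.eqb j l then 1 else 0) * g l) = g j.
Proof.
  induction n as [|n IH]; intros Hj; [lia|]. simpl.
  destruct (Nat.eq_dec j n) as [->|Hjn].
  - rewrite Nat.eqb_refl, rsum_zero; [ring|].
    intros p Hp. destruct (Nat.eqb_spec n p); [lia|ring].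
  - rewrite IH by lia. destruct (Nat.eqb_spec j n); [lia|ring].
Qed.

Lemma exists_argmax n (g : nat -> R) :
  (0 < n)%nat -> exists i0, (i0 < n)%nat /\ forall i, (i < n)%nat -> g i <= g i0.
Proof.
  induction n as [|[|n] IH]; intros Hn; [lia| |].
  - exists 0%nat. split; [lia|]. intros i Hi. replace i with 0%nat by lia. lra.
  - destruct IH as [i0 [Hi0 Hmax]]; [lia|].
    destruct (Rle_dec (g (S n)) (g i0)).
    + exists i0. split; [lia|]. intros i Hi.
      destruct (Nat.eq_dec i (S n)) as [->|]; [auto|apply Hmax; lia].
    + exists (S n). split; [lia|]. intros i Hi.
      destruct (Nat.eq_dec i (S n)) as [->|]; [lra|].
      assert (g i <= g i0) by (apply Hmax; lia). lra.
Qed.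

Lemma Rpower_1_base x : Rpower 1 x = 1.
Proof. unfold Rpower. rewrite ln_1, Rmult_0_r. apply exp_0. Qed.

Lemma Rpower_ge1 a c : 1 <= a -> 0 <= c -> 1 <= Rpower a c.
Proof. intros. rewrite <- (Rpower_O a) by lra. apply Rle_Rpower; lra. Qed.

Lemma Rpower_gt1 a c : 1 < a -> 0 < c -> 1 < Rpower a c.
Proof. intros. rewrite <- (Rpower_O a) by lra. apply Rpower_lt; lra. Qed.

Lemma Rpower_inv_Rpower x q : 0 < x -> 0 < q -> Rpower (Rpower x (/ q)) q = x.
Proof.
  intros. rewrite Rpower_mult. replace (/ q * q) with 1 by (field; lra).
  now apply Rpower_1.
Qed.

Lemma monotone_box_fixpoint (F : (nat -> R) -> nat -> R) (a b : R) :
  a <= b ->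
  (forall x, (forall j, a <= x j <= b) -> forall j, a <= F x j <= b) ->
  (forall x y, (forall j, x j <= y j) -> forall j, F x j <= F y j) ->
  exists t, (forall j, a <= t j <= b) /\ forall j, F t j = t j.
Proof.
  intros Hab Hbox Hmono.
  set (post := fun x => (forall j, a <= x j <= b) /\ forall j, x j <= F x j).
  set (E := fun i y => exists x, post x /\ y = x i).
  assert (Hpost_a : post (fun _ => a)).
  { split; [intros; lra|]. intros j. apply (Hbox (fun _ => a)); intros; lra. }
  assert (Hlub : forall i, { l | is_lub (E i) l }).
  { intros i. apply completeness.
    - exists b. intros y [x [[Hx _] ->]]. apply Hx.
    - exists a, (fun _ => a). auto. }
  set (t := fun i => proj1_sig (Hlub i)).
  assert (Ht : forall i, is_lub (E i) (t i)) by (intros i; exact (proj2_sig (Hlub i))).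
  assert (Hupper : forall x, post x -> forall j, x j <= t j).
  { intros x Hx j. apply (proj1 (Ht j)). now exists x. }
  assert (Htbox : forall j, a <= t j <= b).
  { intros j. split; [apply (Hupper _ Hpost_a)|].
    apply (proj2 (Ht j)). intros y [x [[Hx _] ->]]. apply Hx. }
  assert (Htpost : forall j, t j <= F t j).
  { intros j. apply (proj2 (Ht j)). intros y [x [Hx ->]].
    apply Rle_trans with (F x j); [apply Hx|]. apply Hmono, Hupper, Hx. }
  assert (HFt : post (F t)) by (split; [now apply Hbox|now apply Hmono]).
  exists t. split; [exact Htbox|]. intros j. apply Rle_antisym; [|apply Htpost].
  now apply Hupper.
Qed.

Lemma solves_pos m A q t : solves m A q t -> forall i, (i < m)%nat -> 0 < t i.
Proof. intros Ht i Hi. destruct (Ht i Hi). lra. Qed.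

Lemma solves_le m A q s t :
  (0 < m)%nat -> nonneg_matrix m A -> 1 < q ->
  solves m A q s -> solves m A q t -> forall i, (i < m)%nat -> s i <= t i.
Proof.
  intros Hm HA Hq Hs Ht.
  pose proof (solves_pos _ _ _ _ Hs) as Hspos.
  pose proof (solves_pos _ _ _ _ Ht) as Htpos.
  destruct (exists_argmax m (fun i => s i / t i) Hm) as [i0 [Hi0 Hmax]].
  set (c := s i0 / t i0) in *.
  assert (Hratio : forall j, (j < m)%nat -> s j <= c * t j).
  { intros j Hj. specialize (Hmax j Hj). specialize (Htpos j Hj). simpl in Hmax.
    apply Rmult_le_reg_r with (/ t j); [now apply Rinv_0_lt_compat|].
    replace (c * t j * / t j) with c by (field; lra). exact Hmax. }
  assert (Hc : c <= 1).
  { apply Rnot_lt_le. intros Hc.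
    assert (Hsum : Rpower (s i0) q <= c * Rpower (t i0) q).
    { rewrite (proj2 (Hs i0 Hi0)), (proj2 (Ht i0 Hi0)), <- rsum_mult_l.
      apply rsum_le. intros p Hp.
      pose proof (HA i0 p Hi0 Hp). pose proof (Hratio p Hp). nra. }
    assert (Hsi0 : s i0 = c * t i0) by (unfold c; field; specialize (Htpos i0 Hi0); lra).
    rewrite Hsi0, <- Rpower_mult_distr in Hsum by (auto; lra).
    assert (Hcq : c < Rpower c q).
    { rewrite <- (Rpower_1 c) at 1 by lra. now apply Rpower_lt. }
    assert (0 < Rpower (t i0) q) by apply exp_pos.
    nra. }
  intros i Hi. pose proof (Hratio i Hi). pose proof (Htpos i Hi). nra.
Qed.

Definition zero_or_unit_row (m : nat) (P : nat -> Prop) (f : nat -> R) : Prop :=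
  (forall p, (p < m)%nat -> f p = 0) \/
  exists j, (j < m)%nat /\ P j /\
    forall p, (p < m)%nat -> f p = if Nat.eqb j p then 1 else 0.

Lemma zero_or_unit_row_has_zero m P f :
  (2 <= m)%nat -> zero_or_unit_row m P f -> exists p, (p < m)%nat /\ f p = 0.
Proof.
  intros Hm [Hzero | [j [Hj [_ Hunit]]]].
  - exists 0%nat. split; [lia|]. apply Hzero. lia.
  - set (p := if Nat.eqb j 0 then 1%nat else 0%nat).
    exists p. assert (Hp : (p < m)%nat) by (unfold p; destruct (Nat.eqb j 0); lia).
    split; [exact Hp|]. rewrite Hunit by exact Hp.
    unfold p. destruct (Nat.eqb_spec j 0) as [->|Hj0]; [reflexivity|].
    now rewrite (proj2 (Nat.eqb_neq j 0) Hj0).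
Qed.

Lemma zero_one_row_sum_le1 n f u :
  (forall p, (p < n)%nat -> f p = 0 \/ f p = 1) ->
  (forall p, (p < n)%nat -> 1 <= u p) ->
  rsum n (fun p => f p * u p) <= 1 ->
  zero_or_unit_row n (fun j => u j = 1) f.
Proof.
  intros Hf Hu Hsum.
  assert (Hnn : forall p, (p < n)%nat -> 0 <= f p * u p).
  { intros p Hp. destruct (Hf p Hp) as [-> | ->]; pose proof (Hu p Hp); lra. }
  destruct (classic (exists j, (j < n)%nat /\ f j = 1)) as [[j [Hj Hfj]] | Hnone].
  - right. exists j. split; [exact Hj|].
    pose proof (rsum_ge_term _ _ _ Hnn Hj) as Hterm. simpl in Hterm.
    pose proof (Hu j Hj). split; [rewrite Hfj in Hterm; lra|].
    intros p Hp. destruct (Nat.eqb_spec j p) as [<-|Hjp]; [exact Hfj|].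
    destruct (Hf p Hp) as [Hfp | Hfp]; [exact Hfp|].
    pose proof (rsum_ge_two_terms _ _ _ _ Hnn Hj Hp Hjp) as Hterms. simpl in Hterms.
    pose proof (Hu p Hp). rewrite Hfj, Hfp in Hterms. lra.
  - left. intros p Hp. destruct (Hf p Hp) as [Hfp | Hfp]; [exact Hfp|].
    exfalso. apply Hnone. now exists p.
Qed.

Lemma matpow_zero_or_unit_row m A P :
  (forall i, (i < m)%nat -> P i -> zero_or_unit_row m P (A i)) ->
  forall k i, (i < m)%nat -> P i -> zero_or_unit_row m P (matpow m A k i).
Proof.
  intros HA k. induction k as [|k IH]; intros i Hi HPi.
  - right. now exists i.
  - destruct (IH i Hi HPi) as [Hzero | [j [Hj [HPj Hunit]]]].
    + left. intros p Hp. simpl. apply rsum_zero. intros l Hl.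
      rewrite Hzero by exact Hl. ring.
    + assert (Hrow : forall p, (p < m)%nat -> matpow m A (S k) i p = A j p).
      { intros p Hp. simpl. rewrite <- (rsum_indicator m j (fun l => A l p)) by exact Hj.
        apply rsum_ext. intros l Hl. now rewrite Hunit. }
      destruct (HA j Hj HPj) as [Hzero | [j' [Hj' [HPj' Hunit']]]].
      * left. intros p Hp. rewrite Hrow by exact Hp. now apply Hzero.
      * right. exists j'. repeat split; auto. intros p Hp.
        rewrite Hrow by exact Hp. now apply Hunit'.
Qed.

Lemma primitive_no_unit_row_closed_set m A P :
  (2 <= m)%nat -> primitive_matrix m A ->
  (forall i, (i < m)%nat -> P i -> zero_or_unit_row m P (A i)) ->
  forall i, (i < m)%nat -> ~ P i.
Proof.
  intros Hm [_ [k Hk]] HA i Hi HPi.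
  destruct (zero_or_unit_row_has_zero m P _ Hm (matpow_zero_or_unit_row m A P HA k i Hi HPi))
    as [p [Hp Hzero]].
  specialize (Hk i p Hi Hp). lra.
Qed.

Definition root_map (m : nat) (A : nat -> nat -> R) (q : R) (x : nat -> R) (j : nat) : R :=
  if lt_dec j m then Rpower (Rmax 1 (rsum m (fun p => A j p * x p))) (/ q) else 1.

Lemma zero_one_matrix_nonneg m A : zero_one_matrix m A -> nonneg_matrix m A.
Proof. intros HA i j Hi Hj. destruct (HA i j Hi Hj) as [-> | ->]; lra. Qed.

Lemma root_map_monotone m A q x y :
  nonneg_matrix m A -> 0 < q -> (forall j, x j <= y j) ->
  forall j, root_map m A q x j <= root_map m A q y j.
Proof.
  intros HA Hq Hxy j. unfold root_map. destruct (lt_dec j m) as [Hj|]; [|lra].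
  apply Rle_Rpower_l; [left; now apply Rinv_0_lt_compat|].
  split; [pose proof (Rmax_l 1 (rsum m (fun p => A j p * x p))); lra|].
  apply Rle_max_compat_l, rsum_le. intros p Hp.
  apply Rmult_le_compat_l; [apply HA|apply Hxy]; auto.
Qed.

Lemma root_map_box m A q M :
  zero_one_matrix m A -> 0 < q -> 1 <= M -> Rpower M q = INR m * M ->
  forall x, (forall j, 1 <= x j <= M) -> forall j, 1 <= root_map m A q x j <= M.
Proof.
  intros HA Hq HM HMq x Hx j. unfold root_map.
  destruct (lt_dec j m) as [Hj|]; [|lra].
  assert (Hinv : 0 <= / q) by (left; now apply Rinv_0_lt_compat).
  split; [apply Rpower_ge1; [apply Rmax_l|exact Hinv]|].
  assert (Hsum : rsum m (fun p => A j p * x p) <= INR m * M).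
  { rewrite <- rsum_const. apply rsum_le. intros p Hp.
    pose proof (Hx p). destruct (HA j p Hj Hp) as [-> | ->]; lra. }
  replace M with (Rpower (INR m * M) (/ q))
    by (rewrite <- HMq, Rpower_mult, Rinv_r, Rpower_1; lra).
  apply Rle_Rpower_l; [exact Hinv|].
  split; [pose proof (Rmax_l 1 (rsum m (fun p => A j p * x p))); lra|].
  apply Rmax_lub; [|exact Hsum]. rewrite <- HMq. now apply Rpower_ge1; lra.
Qed.

Lemma root_map_has_fixpoint m A q :
  (0 < m)%nat -> zero_one_matrix m A -> 1 < q ->
  exists t, (forall j, 1 <= t j) /\ forall j, root_map m A q t j = t j.
Proof.
  intros Hm HA Hq.
  assert (Hm1 : 1 <= INR m) by (apply (le_INR 1); lia).
  (* M^q = m M, so a row sum of entries at most M stays at most M after the q-th root. *)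
  set (M := Rpower (INR m) (/ (q - 1))).
  assert (HM : 1 <= M) by (apply Rpower_ge1; [lra|left; apply Rinv_0_lt_compat; lra]).
  assert (HMq : Rpower M q = INR m * M).
  { replace q with ((q - 1) + 1) at 1 by ring. rewrite Rpower_plus, Rpower_1 by lra.
    unfold M at 1. rewrite Rpower_mult. replace (/ (q - 1) * (q - 1)) with 1 by (field; lra).
    rewrite Rpower_1; lra. }
  destruct (monotone_box_fixpoint (root_map m A q) 1 M HM) as [t [Ht Hfix]].
  - apply root_map_box; auto; lra.
  - intros x y. apply root_map_monotone; [now apply zero_one_matrix_nonneg|lra].
  - exists t. split; [intros j; apply Ht|exact Hfix].
Qed.

Section RootMapFixpoint.

Variables (m : nat) (A : nat -> nat -> R) (q : R) (t : nat -> R).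
Hypothesis Hq : 1 < q.
Hypothesis Ht1 : forall j, 1 <= t j.
Hypothesis Hfix : forall j, root_map m A q t j = t j.

Lemma root_map_fixpoint_pow i :
  (i < m)%nat -> Rpower (t i) q = Rmax 1 (rsum m (fun p => A i p * t p)).
Proof.
  intros Hi. rewrite <- Hfix. unfold root_map. destruct (lt_dec i m); [|lia].
  apply Rpower_inv_Rpower; [|lra].
  pose proof (Rmax_l 1 (rsum m (fun p => A i p * t p))). lra.
Qed.

Lemma root_map_fixpoint_gt1 :
  (2 <= m)%nat -> zero_one_matrix m A -> primitive_matrix m A ->
  forall i, (i < m)%nat -> 1 < t i.
Proof.
  intros Hm HA Hprim i Hi.
  destruct (Rle_lt_or_eq_dec 1 (t i) (Ht1 i)) as [|Hti]; [assumption|exfalso].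
  apply (primitive_no_unit_row_closed_set m A (fun j => t j = 1) Hm Hprim) with i;
    [|exact Hi|now symmetry].
  intros i' Hi' Hti'. apply zero_one_row_sum_le1; [intros p Hp; now apply HA|intros; apply Ht1|].
  pose proof (root_map_fixpoint_pow i' Hi') as Hpow.
  rewrite Hti', Rpower_1_base in Hpow.
  pose proof (Rmax_r 1 (rsum m (fun p => A i' p * t p))). lra.
Qed.

Lemma root_map_fixpoint_solves :
  (forall i, (i < m)%nat -> 1 < t i) -> solves m A q t.
Proof.
  intros Hgt i Hi. split; [now apply Hgt|].
  pose proof (root_map_fixpoint_pow i Hi) as Hpow.
  assert (1 < Rpower (t i) q) by (apply Rpower_gt1; [now apply Hgt|lra]).
  rewrite Hpow in *. apply Rmax_right, Rnot_lt_le. intros Hlt.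
  rewrite Rmax_left in * by lra. lra.
Qed.

End RootMapFixpoint.

Theorem lemma1p2 (m : nat) (A : nat -> nat -> R) (q : R) :
  le 2 m -> zero_one_matrix m A -> primitive_matrix m A -> 1 < q ->
  exists t : nat -> R, solves m A q t /\
    (forall s : nat -> R, solves m A q s -> forall i, lt i m -> s i = t i).
Proof.
  intros Hm HA Hprim Hq.
  destruct (root_map_has_fixpoint m A q ltac:(lia) HA Hq) as [t [Ht1 Hfix]].
  assert (Ht : solves m A q t).
  { apply root_map_fixpoint_solves; auto.
    now apply (root_map_fixpoint_gt1 m A q t Hq Ht1 Hfix). }
  exists t. split; [exact Ht|].
  intros s Hs i Hi. pose proof (zero_one_matrix_nonneg m A HA) as HAnn.
  apply Rle_antisym; [apply (solves_le m A q s t)|apply (solves_le m A q t s)]; auto; lia.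
Qed.
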